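(* Let $\Phi$ be an irreducible crystallographic root system with simple system $S$ and positive system $\Phi^+$, let $k$ be a positive integer, and let $\mathcal{I}=(I_1,\ldots,I_k)$ be a geometric chain of $k$ ideals in the root poset of $\Phi$. Define $\underline{\mathcal{I}}=(\underline{I}_1,\ldots,\underline{I}_{k+1})$ by $\underline{I}_i=I_i$ for $i\in\{1,\ldots,k\}$ and $\underline{I}_{k+1}=\bigcup_{i+j=k+1}\big((I_i+I_j)\cap\Phi^+\big)\cup I_k\cup S$. Then $\underline{\mathcal{I}}$ is a positive geometric chain of $k+1$ ideals, and the bounded dominant region $\underline{R}=\theta^{-1}(\underline{\mathcal{I}})$ of the $(k+1)$-Catalan arrangement of $\Phi$ is contained in the dominant region $R=\theta^{-1}(\mathcal{I})$ of the $k$-Catalan arrangement.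
   Context: $\Phi$ lives in a real Euclidean space $V$ with inner product $\langle\cdot,\cdot\rangle$; $H_\alpha^r=\{x\in V\mid\langle x,\alpha\rangle=r\}$. For a positive integer $K$, the $K$-Catalan arrangement consists of $H_\alpha^r$, $\alpha\in\Phi$, $r\in\{0,\ldots,K\}$; regions are connected components of its complement; $R$ is dominant if $\langle x,\alpha\rangle>0$ for all $\alpha\in\Phi^+$, $x\in R$. The root poset is $\Phi^+$ with $\alpha\le\beta$ iff $\beta-\alpha$ is a nonnegative integer combination of $S$; ideals are down-closed subsets, order filters up-closed subsets. Sums of sets are sumsets $A+B=\{a+b\mid a\in A,b\in B\}$. An ascending chain $I_1\subseteq\cdots\subseteq I_K$ of ideals, with corresponding order filters $J_i=\Phi^+\setminus I_i$, is geometric if $(I_i+I_j)\cap\Phi^+\subseteq I_{i+j}$ for all $i,j\in\{0,\ldots,K\}$ with $i+j\le K$, and $(J_i+J_j)\cap\Phi^+\subseteq J_{i+j}$ for all $i,j\in\{0,\ldots,K\}$, where $I_0=\varnothing$, $J_0=\Phi^+$ and $J_i=J_K$ for $i>K$. It is positive if $S\subseteq I_K$. For a dominant region $R$ of the $K$-Catalan arrangement, $\theta(R)=(I_1,\ldots,I_K)$ with $I_i=\{\alpha\in\Phi^+\mid\langle x,\alpha\rangle<i\text{ for all }x\in R\}$; it is known that $\theta$ is a bijection from dominant regions of the $K$-Catalan arrangement to geometric chains of $K$ ideals, restricting to a bijection between bounded dominant regions and positive geometric chains. In the union defining $\underline{I}_{k+1}$, $i,j$ range over $\{0,\ldots,k\}$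 with $I_0=\varnothing$. *)

From mathcomp Require Import all_boot all_order all_algebra.
From mathcomp Require Import all_classical all_reals all_analysis.
Import numFieldNormedType.Exports.
Import Order.TTheory GRing.Theory Num.Theory.

Set Implicit Arguments.
Unset Strict Implicit.
Unset Printing Implicit Defensive.

Local Open Scope classical_set_scope.
Local Open Scope ring_scope.

Definition dotv (R : realType) (n : nat) (x y : 'rV[R]_n) : R :=
  \sum_(i < n) x 0 i * y 0 i.

Definition is_root_system (R : realType) (n : nat) (Phi : seq 'rV[R]_n) : Prop :=
  [/\ (0 \notin Phi),
      (forall v : 'rV[R]_n, exists c : 'I_(size Phi) -> R,
          v = \sum_(i < size Phi) c i *: Phi`_i),
      (forall a, a \in Phi -> forall c : R, c *: a \in Phi -> c = 1 \/ c = -1),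
      (forall a b, a \in Phi -> b \in Phi ->
          b - (2 * dotv b a / dotv a a) *: a \in Phi) &
      (forall a b, a \in Phi -> b \in Phi ->
          exists z : int, 2 * dotv b a / dotv a a = z%:~R)].

Definition irreducible_rs (R : realType) (n : nat) (Phi : seq 'rV[R]_n) : Prop :=
  ~ (exists A B : set 'rV[R]_n,
        [/\ A !=set0, B !=set0, [set x | x \in Phi] = A `|` B &
            forall a b, A a -> B b -> dotv a b = 0]).

Definition is_simple_system (R : realType) (n : nat) (Phi S : seq 'rV[R]_n) : Prop :=
  [/\ {subset S <= Phi}, free S &
      forall a, a \in Phi -> exists c : 'I_(size S) -> R,
        a = \sum_(i < size S) c i *: S`_i /\
        ((forall i, 0 <= c i) \/ (forall i, c i <= 0))].

Definition pos_roots (R : realType) (n : nat) (Phi S : seq 'rV[R]_n) : set 'rV[R]_n :=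
  [set a | a \in Phi /\ exists c : 'I_(size S) -> R,
     (forall i, 0 <= c i) /\ a = \sum_(i < size S) c i *: S`_i].

Definition root_le (R : realType) (n : nat) (S : seq 'rV[R]_n) (a b : 'rV[R]_n) : Prop :=
  exists c : 'I_(size S) -> nat, b - a = \sum_(i < size S) (c i)%:R *: S`_i.

Definition is_ideal (R : realType) (n : nat) (P : set 'rV[R]_n) (S : seq 'rV[R]_n)
    (A : set 'rV[R]_n) : Prop :=
  A `<=` P /\ forall a b, P a -> P b -> root_le S a b -> A b -> A a.

Definition sumset (R : realType) (n : nat) (A B : set 'rV[R]_n) : set 'rV[R]_n :=
  [set x | exists a b, [/\ A a, B b & x = a + b]].

(* A chain (I_1, ..., I_K) is represented by I : nat -> set V, only indices
   1..K being relevant.  Conventions: I_0 = empty, J_0 = Phi^+, J_i = J_K for i > K. *)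
Definition Iext (R : realType) (n : nat) (I : nat -> set 'rV[R]_n) (i : nat) : set 'rV[R]_n :=
  if i == 0%N then set0 else I i.

Definition Jext (R : realType) (n : nat) (P : set 'rV[R]_n) (I : nat -> set 'rV[R]_n)
    (K i : nat) : set 'rV[R]_n :=
  if i == 0%N then P else P `\` I (minn i K).

Definition is_geometric_chain (R : realType) (n : nat) (P : set 'rV[R]_n)
    (S : seq 'rV[R]_n) (K : nat) (I : nat -> set 'rV[R]_n) : Prop :=
  [/\ (forall i, (1 <= i <= K)%N -> is_ideal P S (I i)),
      (forall i, (1 <= i < K)%N -> I i `<=` I i.+1),
      (forall i j, (i + j <= K)%N ->
          sumset (Iext I i) (Iext I j) `&` P `<=` Iext I (i + j)) &
      (forall i j, (i <= K)%N -> (j <= K)%N ->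
          sumset (Jext P I K i) (Jext P I K j) `&` P `<=` Jext P I K (i + j))].

Definition is_positive_chain (R : realType) (n : nat) (S : seq 'rV[R]_n) (K : nat)
    (I : nat -> set 'rV[R]_n) : Prop :=
  [set x | x \in S] `<=` I K.

Definition catalan_compl (R : realType) (n : nat) (Phi : seq 'rV[R]_n) (K : nat)
    : set 'rV[R]_n :=
  [set x | forall a, a \in Phi -> forall r : nat, (r <= K)%N -> dotv x a != r%:R].

Definition is_region (R : realType) (n : nat) (Phi : seq 'rV[R]_n) (K : nat)
    (Rg : set 'rV[R]_n) : Prop :=
  exists x, catalan_compl Phi K x /\ Rg = connected_component (catalan_compl Phi K) x.

Definition is_dominant (R : realType) (n : nat) (P : set 'rV[R]_n) (Rg : set 'rV[R]_n) : Prop :=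
  forall x, Rg x -> forall a, P a -> 0 < dotv x a.

Definition theta (R : realType) (n : nat) (P : set 'rV[R]_n) (Rg : set 'rV[R]_n) (i : nat)
    : set 'rV[R]_n :=
  [set a | P a /\ forall x, Rg x -> dotv x a < i%:R].

Definition underline_chain (R : realType) (n : nat) (P : set 'rV[R]_n) (S : seq 'rV[R]_n)
    (k : nat) (I : nat -> set 'rV[R]_n) (i : nat) : set 'rV[R]_n :=
  if i == k.+1 then
    [set x | exists i1 j1, [/\ (i1 <= k)%N, (j1 <= k)%N, (i1 + j1 = k.+1)%N &
               (sumset (Iext I i1) (Iext I j1) `&` P) x]]
    `|` I k `|` [set x | x \in S]
  else I i.

(* Only the new ideal \underline{I}_{k+1} needs work.  It is an order ideal
   because it is stable under subtracting simple roots, and it avoids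
   (J_i + J_j) ∩ Φ^+ for i + j > k.  Both facts rest on the exchange property
   of roots: if a + b = c + d ≠ 0, one of <a,c>, <a,d>, <b,c>, <b,d> is
   positive, so a - c or a - d is a root or zero; each resulting case is
   excluded by the geometric conditions on I.
   For the regions, \underline{R} and R both lie in the convex set cut out by
   the hyperplanes H_α^i, i <= k, on the sides prescribed by I.  This set
   avoids the k-Catalan arrangement, so the segment joining a point of R to a
   point of \underline{R} stays in one region. *)

From mathcomp Require Import all_boot all_order all_algebra.
From mathcomp Require Import all_classical all_reals all_analysis.
From mathcomp Require Import ring lra zify.
Import numFieldNormedType.Exports.
Import Order.TTheory GRing.Theory Num.Theory.
Local Open Scope classical_set_scope.
Local Open Scope ring_scope.
Set Implicit Arguments.
Unset Strict Implicit.
Unset Printing Implicit Defensive.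

Section InnerProduct.
Variables (R : realType) (n : nat).
Implicit Types x y a : 'rV[R]_n.

Lemma dotvDl x y a : dotv (x + y) a = dotv x a + dotv y a.
Proof. by rewrite /dotv -big_split; apply: eq_bigr => i _; rewrite mxE mulrDl. Qed.

Lemma dotvZl (c : R) x a : dotv (c *: x) a = c * dotv x a.
Proof. by rewrite /dotv mulr_sumr; apply: eq_bigr => i _; rewrite mxE mulrA. Qed.

Lemma dotvNl x a : dotv (- x) a = - dotv x a.
Proof. by rewrite -scaleN1r dotvZl mulN1r. Qed.

Lemma dotvBl x y a : dotv (x - y) a = dotv x a - dotv y a.
Proof. by rewrite dotvDl dotvNl. Qed.

Lemma dotvC x y : dotv x y = dotv y x.
Proof. by apply: eq_bigr => i _; rewrite mulrC. Qed.

Lemma dotvDr x y a : dotv a (x + y) = dotv a x + dotv a y.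
Proof. by rewrite dotvC dotvDl !(dotvC a). Qed.

Lemma dotvNr x a : dotv a (- x) = - dotv a x.
Proof. by rewrite dotvC dotvNl dotvC. Qed.

Lemma dotvBr x y a : dotv a (x - y) = dotv a x - dotv a y.
Proof. by rewrite dotvDr dotvNr. Qed.

Lemma dotv_suml (I : Type) (r : seq I) (F : I -> 'rV[R]_n) a :
  dotv (\sum_(i <- r) F i) a = \sum_(i <- r) dotv (F i) a.
Proof.
elim: r => [|i r IH]; last by rewrite !big_cons dotvDl IH.
by rewrite !big_nil /dotv big1 // => j _; rewrite mxE mul0r.
Qed.

Lemma dotv_ge0 x : 0 <= dotv x x.
Proof. by apply: sumr_ge0 => i _; rewrite -expr2 sqr_ge0. Qed.

Lemma dotv_eq0 x : (dotv x x == 0) = (x == 0).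
Proof.
apply/eqP/eqP => [|->]; last by rewrite /dotv big1 // => i _; rewrite mxE mul0r.
move=> /eqP; rewrite psumr_eq0 => [/allP x0|i _]; last by rewrite -expr2 sqr_ge0.
apply/rowP => j; rewrite mxE.
by have := x0 j (mem_index_enum j); rewrite mulf_eq0 orbb => /eqP.
Qed.

Lemma dotv_gt0 x : x != 0 -> 0 < dotv x x.
Proof. by move=> x0; rewrite lt_neqAle dotv_ge0 andbT eq_sym dotv_eq0. Qed.

Lemma dotv_continuous a : continuous (fun x : 'rV[R]_n => dotv x a).
Proof.
rewrite /dotv; elim: (index_enum _) => [|i r IH].
  by under eq_fun do rewrite big_nil; exact: cst_continuous.
have -> : (fun x : 'rV[R]_n => \sum_(j <- i :: r) x 0 j * a 0 j) =
    (fun x => x 0 i * a 0 i) + (fun x => \sum_(j <- r) x 0 j * a 0 j).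
  by apply: funext => x; rewrite big_cons.
move=> x; apply: continuousD; last exact: IH.
by apply: continuousM; [exact: coord_continuous|exact: cst_continuous].
Qed.

End InnerProduct.

Lemma le_of_ratio_intr (R : realFieldType) (x y : R) (z : int) :
  0 < x -> 0 < y -> 2 * x / y = z%:~R -> z != 1 -> y <= x.
Proof.
move=> x0 y0 xyz z1.
have z0 : (0 < z)%R by rewrite -(ltr0z R) -xyz divr_gt0 ?mulr_gt0.
have z2 : 2 <= z%:~R :> R by rewrite -[2]/(2%:~R) ler_int; lia.
have : 2 * x = z%:~R * y by rewrite -xyz divfK ?gt_eqF.
nra.
Qed.

Lemma convex_comb_lt (R : realFieldType) (x y c t : R) : 0 <= t <= 1 ->
  x < c -> y < c -> (1 - t) * x + t * y < c.
Proof. by case/andP=> t0 t1 xc yc; have [xy|yx] := lerP x y; nra. Qed.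

Lemma convex_comb_gt (R : realFieldType) (x y c t : R) : 0 <= t <= 1 ->
  c < x -> c < y -> c < (1 - t) * x + t * y.
Proof. by case/andP=> t0 t1 xc yc; have [xy|yx] := lerP x y; nra. Qed.

Section RootSystem.
Variables (R : realType) (n : nat) (Phi : seq 'rV[R]_n).
Hypothesis RS : is_root_system Phi.

Lemma root_neq0 a : a \in Phi -> a != 0.
Proof. by case: RS => Phi0 _ _ _ _; apply: contraTneq => ->. Qed.

Lemma root_opp a : a \in Phi -> - a \in Phi.
Proof.
move=> Ha; case: RS => _ _ _ refl _; have := refl a a Ha Ha.
have aa0 : dotv a a != 0 by rewrite gt_eqF // dotv_gt0 // root_neq0.
by rewrite mulfK // -[2]/(1 + 1) scalerDl scale1r opprD addrA subrr add0r.
Qed.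

Lemma subr_root_sym a c : (a - c \in Phi) = (c - a \in Phi).
Proof. by apply/idP/idP => /root_opp; rewrite opprB. Qed.

(* If <u,v> > 0, one of the Cartan integers 2<u,v>/<v,v>, 2<u,v>/<u,u> is 1
   (and the corresponding reflection yields +-(u - v)), unless
   <u,v> >= <u,u>, <v,v>, which forces |u - v|^2 <= 0. *)
Lemma subr_root u v : u \in Phi -> v \in Phi -> 0 < dotv u v -> u != v ->
  u - v \in Phi.
Proof.
move=> Hu Hv uv0 neq_uv; case: RS => _ _ _ refl cryst.
have uu0 := dotv_gt0 (root_neq0 Hu); have vv0 := dotv_gt0 (root_neq0 Hv).
have [z zE] := cryst v u Hv Hu; have [z' z'E] := cryst u v Hu Hv.
have [z1|z_neq1] := eqVneq z 1.
  by have := refl v u Hv Hu; rewrite zE z1 scale1r.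
have [z'1|z'_neq1] := eqVneq z' 1.
  by have := refl u v Hu Hv; rewrite z'E z'1 scale1r subr_root_sym.
have le_vu := le_of_ratio_intr uv0 vv0 zE z_neq1.
rewrite dotvC in uv0; have le_uv := le_of_ratio_intr uv0 uu0 z'E z'_neq1.
have : dotv (u - v) (u - v) <= 0.
  by rewrite dotvBl !dotvBr (dotvC v u) in le_uv *; lra.
by rewrite leNgt dotv_gt0 // subr_eq0.
Qed.

Lemma eq_or_subr_root a c : a \in Phi -> c \in Phi -> 0 < dotv a c ->
  a = c \/ a - c \in Phi.
Proof.
by move=> Ha Hc ac0; have [->|/(subr_root Ha Hc ac0)] := eqVneq a c; [left|right].
Qed.

(* Expanding |a + b|^2 = <a + b, c + d> > 0, one of <a,c>, <a,d>, <b,c>,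
   <b,d> is positive; and b - d = c - a, b - c = d - a. *)
Lemma root_sum_exchange a b c d : a \in Phi -> b \in Phi -> c \in Phi -> d \in Phi ->
  a + b = c + d -> a + b != 0 ->
  (a = c \/ a - c \in Phi) \/ (a = d \/ a - d \in Phi).
Proof.
move=> Ha Hb Hc Hd abcd ab0.
have bdca : b - d = c - a.
  by apply/eqP; rewrite subr_eq addrAC -abcd [a + b]addrC addrK.
have bcda : b - c = d - a.
  by apply/eqP; rewrite subr_eq addrAC [d + c]addrC -abcd [a + b]addrC addrK.
have := dotv_gt0 ab0; rewrite {2}abcd dotvDl !dotvDr => sum_gt0.
have [ac0|ac0] := ltP 0 (dotv a c); first by left; apply: eq_or_subr_root.
have [ad0|ad0] := ltP 0 (dotv a d); first by right; apply: eq_or_subr_root.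
have [bd0|bd0] := ltP 0 (dotv b d).
  left; case: (eq_or_subr_root Hb Hd bd0) => [bd|].
    by left; move: abcd; rewrite bd => /addIr.
  by rewrite bdca subr_root_sym; right.
have [bc0|bc0] := ltP 0 (dotv b c).
  right; case: (eq_or_subr_root Hb Hc bc0) => [bc|].
    by left; move: abcd; rewrite bc addrC => /addrI.
  by rewrite bcda subr_root_sym; right.
by exfalso; clear -sum_gt0 ac0 ad0 bd0 bc0; lra.
Qed.

End RootSystem.

Section SimpleSystem.
Variables (R : realType) (n : nat) (Phi S : seq 'rV[R]_n).
Hypothesis RS : is_root_system Phi.
Hypothesis SS : is_simple_system Phi S.
Local Notation P := (pos_roots Phi S).
Local Notation comb c := (\sum_(i < size S) c i *: S`_i).

Lemma combD (c d : 'I_(size S) -> R) :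
  comb c + comb d = comb (fun i => c i + d i).
Proof. by rewrite -big_split; apply: eq_bigr => i _; rewrite scalerDl. Qed.

Lemma combN (c : 'I_(size S) -> R) : - comb c = comb (fun i => - c i).
Proof. by rewrite -sumrN; apply: eq_bigr => i _; rewrite scaleNr. Qed.

Lemma comb_eq0 (c : 'I_(size S) -> R) : comb c = 0 -> forall i, c i = 0.
Proof. by case: SS => _ /(@freeP _ _ _ (in_tuple S)) freeS _; apply: freeS. Qed.

Lemma comb_delta (i : 'I_(size S)) : comb (fun j => (j == i)%:R) = S`_i.
Proof.
rewrite (bigD1 i) //= eqxx scale1r big1 ?addr0 // => j /negbTE ->.
by rewrite scale0r.
Qed.

Lemma comb_single (c : 'I_(size S) -> R) i :
  (forall j, j != i -> c j = 0) -> comb c = c i *: S`_i.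
Proof.
by move=> c0; rewrite (bigD1 i) //= big1 ?addr0 // => j /c0 ->; rewrite scale0r.
Qed.

Definition nonneg_comb x := exists c, (forall i, 0 <= c i) /\ x = comb c.

Lemma nonneg_combD x y : nonneg_comb x -> nonneg_comb y -> nonneg_comb (x + y).
Proof.
move=> [c [c0 ->]] [d [d0 ->]]; exists (fun i => c i + d i).
by split; [move=> i; rewrite addr_ge0|rewrite combD].
Qed.

Local Notation combn m := (comb (fun i => (m i)%:R)).

Lemma nonneg_comb_nat (m : 'I_(size S) -> nat) : nonneg_comb (combn m).
Proof. by exists (fun i => (m i)%:R). Qed.

Lemma pos_root_root a : P a -> a \in Phi. Proof. by case. Qed.

Lemma simple_pos_root s : s \in S -> P s.
Proof.
move=> sS; case: SS => sub _ _; split; first exact: sub.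
pose i : 'I_(size S) := Ordinal (etrans (index_mem s S) sS).
exists (fun j => (j == i)%:R); split; first by move=> j; rewrite ler0n.
by rewrite comb_delta nth_index.
Qed.

Lemma pos_or_neg_root a : a \in Phi -> P a \/ P (- a).
Proof.
move=> Ha; case: SS => _ _ /(_ a Ha) [c [ac [c0|c0]]].
  by left; split=> //; exists c.
right; split; first exact: (root_opp RS Ha).
by exists (fun i => - c i); split; [move=> i; rewrite oppr_ge0|rewrite ac combN].
Qed.

Lemma pos_rootN a : P a -> ~ P (- a).
Proof.
move=> [Ha [c [c0 ac]]] [_ [d [d0 ad]]].
have cd0 : comb (fun i => c i + d i) = 0 by rewrite -combD -ac -ad subrr.
have c_eq0 i : c i = 0.
  by have := comb_eq0 cd0 i; have := c0 i; have := d0 i; lra.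
by move: (root_neq0 RS Ha); rewrite ac big1 ?eqxx // => i _; rewrite c_eq0 scale0r.
Qed.

(* Writing a, b in the basis S, a + b = s_i forces a = c s_i and b = (1 - c) s_i
   with 0 <= c <= 1, which reducedness rules out. *)
Lemma pos_root_addr_notin_simple a b : P a -> P b -> a + b \notin S.
Proof.
move=> [Ha [c [c0 ac]]] [Hb [d [d0 bd]]]; apply/negP => abS.
pose i : 'I_(size S) := Ordinal (etrans (index_mem _ _) abS).
have Si : S`_i = a + b by rewrite nth_index.
have cd_delta : comb (fun j => c j + d j - (j == i)%:R) = 0.
  by rewrite -combD -combN comb_delta -combD -ac -bd Si subrr.
have cd_i := comb_eq0 cd_delta i; rewrite eqxx in cd_i.
have cd_j j : j != i -> c j = 0 /\ d j = 0.
  move=> /negbTE ji; have := comb_eq0 cd_delta j; rewrite ji subr0.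
  by have := c0 j; have := d0 j; clear -R; split; lra.
have aSi : a = c i *: S`_i by rewrite ac; apply: comb_single => j /cd_j [].
have bSi : b = d i *: S`_i by rewrite bd; apply: comb_single => j /cd_j [].
case: RS => _ _ reduced _ _; case: SS => sub _ _.
have SiPhi : S`_i \in Phi by apply: sub; rewrite Si.
have ci1 : c i = 1.
  by case: (reduced _ SiPhi (c i)); rewrite -?aSi // => ci; have := c0 i; clear -ci; lra.
have di1 : d i = 1.
  by case: (reduced _ SiPhi (d i)); rewrite -?bSi // => di; have := d0 i; clear -di; lra.
by move: cd_i; rewrite ci1 di1 /=; lra.
Qed.

Lemma exists_simple_dotv_gt0 a b (m : 'I_(size S) -> nat) :
  b - a = combn m -> a != b -> exists i, (0 < m i)%N /\ 0 < dotv S`_i (b - a).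
Proof.
move=> bam neq_ab.
have : 0 < \sum_i (m i)%:R * dotv S`_i (b - a).
  under eq_bigr do rewrite -dotvZl.
  by rewrite -dotv_suml -bam dotv_gt0 // subr_eq0 eq_sym.
case: (pselect (exists i, (0 < m i)%N /\ 0 < dotv S`_i (b - a))) => // none.
rewrite ltNge sumr_le0 // => i _; rewrite leNgt; apply/negP => term_gt0.
apply: none; exists i; move: term_gt0; case: (m i) => [|k]; first by rewrite mul0r ltxx.
by rewrite pmulr_rgt0 // ltr0n.
Qed.

Lemma combn_subr_simple (m : 'I_(size S) -> nat) i : (0 < m i)%N ->
  combn m - S`_i = combn (fun j => m j - (j == i))%N.
Proof.
move=> mi0; rewrite -comb_delta combN combD; apply: eq_bigr => j _.
by rewrite natrB //; case: eqVneq => //= ->.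
Qed.

Lemma sum_subr_simple_lt (m : 'I_(size S) -> nat) i : (0 < m i)%N ->
  (\sum_j (m j - (j == i)) < \sum_j m j)%N.
Proof.
move=> mi0; rewrite (bigD1 i) //= [X in (_ < X)%N](bigD1 i) //= eqxx.
by rewrite (eq_bigr m) => [|j /negbTE ->]; [lia|exact: subn0].
Qed.

(* Induction on the height of b - a: some simple root s_i occurring in b - a
   has <s_i, b - a> > 0, so either b - s_i or a + s_i is a positive root
   between a and b. *)
Lemma down_closed_of_simple_descent (U : set 'rV[R]_n) :
  (forall b s, U b -> s \in S -> P (b - s) -> U (b - s)) ->
  forall a b, P a -> P b -> root_le S a b -> U b -> U a.
Proof.
move=> Ustep a b Pa Pb [m].
have [N ltN] := ubnP (\sum_i m i)%N.
elim: N => // N IH in a b m Pa Pb ltN *; move=> bam Ub.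
have [->//|neq_ab] := eqVneq a b.
have [i [mi0 dot_gt0]] := exists_simple_dotv_gt0 bam neq_ab.
pose m' j := (m j - (j == i))%N.
have ltN' : (\sum_j m' j < N)%N := leq_trans (sum_subr_simple_lt mi0) ltN.
have bam' : b - S`_i - a = combn m' by rewrite -combn_subr_simple // -bam addrAC.
have sS : S`_i \in S := mem_nth 0 (ltn_ord i).
have Psi := simple_pos_root sS.
have [[Ha ca] [Hb _]] := (Pa, Pb).
have [bs_gt0|bs_le0] := ltP 0 (dotv b S`_i).
  case: (eq_or_subr_root RS Hb (pos_root_root Psi) bs_gt0) => [bs|Hbs].
    have Pna : P (- a).
      split; first exact: root_opp.
      have -> : - a = b - S`_i - a by rewrite bs subrr sub0r.
      by rewrite bam'; exact: nonneg_comb_nat.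
    by case: (pos_rootN Pa Pna).
  have Pbs : P (b - S`_i).
    split=> //; rewrite -(subrK a (b - S`_i)) bam' addrC.
    by apply: nonneg_combD => //; exact: nonneg_comb_nat.
  by apply: (IH a (b - S`_i) m') => //; exact: Ustep.
have a_negs_gt0 : 0 < dotv a (- S`_i).
  by move: dot_gt0 bs_le0; rewrite dotvNr dotvBr (dotvC S`_i a) (dotvC S`_i b); lra.
have Has : a + S`_i \in Phi.
  have Hns := root_opp RS (pos_root_root Psi).
  case: (eq_or_subr_root RS Ha Hns a_negs_gt0) => [eq_a|]; last by rewrite opprK.
  by case: (pos_rootN Psi); rewrite -eq_a.
have Pas : P (a + S`_i) by split=> //; apply: nonneg_combD => //; case: Psi.
have Uas : U (a + S`_i) by apply: (IH (a + S`_i) b m') => //; rewrite opprD addrA addrAC.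
by have := Ustep _ _ Uas sS; rewrite addrK; apply.
Qed.

Definition pos_exchange a b c d :=
  [\/ a = c /\ b = d, exists2 e, P e & d = b + e | exists2 e, P e & c = a + e].

Lemma pos_root_addr_neq0 a b : P a -> P b -> a + b != 0.
Proof.
move=> Pa Pb; apply/negP; rewrite addr_eq0 => /eqP ab.
by apply: (pos_rootN Pb); rewrite -ab.
Qed.

Lemma pos_root_sum_exchange a b c d : P a -> P b -> P c -> P d -> a + b = c + d ->
  pos_exchange a b c d \/ pos_exchange a b d c.
Proof.
move=> Pa Pb Pc Pd abcd.
have exchange_of_diff c' d' : a + b = c' + d' -> a = c' \/ a - c' \in Phi ->
    pos_exchange a b c' d'.
  move=> abcd' [ac|/pos_or_neg_root [Pe|Pe]].
  - by constructor 1; split=> //; move: abcd'; rewrite ac => /addrI.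
  - constructor 2; exists (a - c') => //.
    by rewrite addrA [b + a]addrC abcd' [c' + d']addrC addrK.
  - by constructor 3; exists (- (a - c')); rewrite // opprB addrC subrK.
have [ac|ad] := root_sum_exchange RS (pos_root_root Pa) (pos_root_root Pb)
  (pos_root_root Pc) (pos_root_root Pd) abcd (pos_root_addr_neq0 Pa Pb).
  by left; exact: exchange_of_diff.
by right; apply: exchange_of_diff => //; rewrite abcd addrC.
Qed.

End SimpleSystem.

Section Jext.
Context {R : realType} {n : nat} {P : set 'rV[R]_n} {I : nat -> set 'rV[R]_n} {K : nat}.

Lemma Jext_pos m x : Jext P I K m x -> P x.
Proof. by rewrite /Jext; case: (m == 0)%N => // -[]. Qed.

Lemma JextE m x : (1 <= m <= K)%N -> Jext P I K m x <-> P x /\ ~ I m x.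
Proof. by move=> /andP[m1 mK]; rewrite /Jext (minn_idPl mK); case: m m1 {mK}. Qed.

Lemma Jext_ge m : (0 < m)%N -> (K <= m)%N -> Jext P I K m = P `\` I K.
Proof. by move=> m0 Km; rewrite /Jext (minn_idPr Km) ifN // -lt0n. Qed.

End Jext.

Section GeometricChain.
Variables (R : realType) (n : nat) (Phi S : seq 'rV[R]_n).
Hypothesis RS : is_root_system Phi.
Hypothesis SS : is_simple_system Phi S.
Variables (k : nat) (I : nat -> set 'rV[R]_n).
Hypothesis k_gt0 : (0 < k)%N.
Hypothesis GC : is_geometric_chain (pos_roots Phi S) S k I.
Local Notation P := (pos_roots Phi S).
Local Notation J := (Jext P I k).
Local Notation Ubar := (underline_chain P S k I k.+1).

Lemma chain_sub_pos i : (1 <= i <= k)%N -> I i `<=` P.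
Proof. by case: GC => ideal _ _ _ /ideal []. Qed.

Lemma chain_mono i j : (1 <= i)%N -> (i <= j)%N -> (j <= k)%N -> I i `<=` I j.
Proof.
move=> i1; elim: j => [|j IH] ij jk; first by case: i i1 ij.
move: ij; rewrite leq_eqVlt ltnS => /orP[/eqP-> //|ij].
by apply: subset_trans (IH ij (ltnW jk)) _; case: GC => _ mono _ _; apply: mono; lia.
Qed.

Lemma Jext_add i j a b : (i <= k)%N -> (j <= k)%N -> J i a -> J j b -> P (a + b) ->
  J (i + j) (a + b).
Proof.
by case: GC => _ _ _ Jadd ik jk Ja Jb Pab; apply: Jadd => //; split=> //; exists a, b.
Qed.

Lemma chain_add i j a b : (1 <= i)%N -> (1 <= j)%N -> (i + j <= k)%N ->
  I i a -> I j b -> P (a + b) -> I (i + j) (a + b).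
Proof.
case: GC => _ _ Iadd _ i1 j1 ijk Ia Ib Pab; have := Iadd i j ijk (a + b).
rewrite /Iext; case: i i1 {ijk} Ia => // i _ Ia; case: j j1 Ib => // j _ Ib.
by apply; split=> //; exists a, b.
Qed.

Lemma lt_of_chain_Jext p i x : (1 <= p)%N -> (i <= k)%N -> I p x -> J i x -> (i < p)%N.
Proof.
move=> p1 ik Ix; case: i ik => // i ik /JextE[]; first by rewrite ik.
by move=> _ nIx; rewrite ltnNge; apply/negP => pi; apply/nIx/(chain_mono p1 pi ik).
Qed.

Lemma chain_of_not_Jext m x : (1 <= m <= k)%N -> P x -> ~ J m x -> I m x.
Proof. by move=> mk Px nJx; apply: contrapT => nIx; apply/nJx/JextE. Qed.

(* Contrapositive of the condition J_i + J_(p-i) <= J_p. *)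
Lemma chain_level_diff i p a e : (i <= k)%N -> (1 <= p <= k)%N ->
  J i a -> P e -> I p (a + e) -> (i < p)%N /\ I (p - i) e.
Proof.
move=> ik pk Ja Pe Iae; have Pae := chain_sub_pos pk Iae; case/andP: pk => p1 pk.
have ip : (i < p)%N.
  by apply: lt_of_chain_Jext Iae _ => //; rewrite -[i]addn0; apply: Jext_add.
split=> //; apply: chain_of_not_Jext => //; first lia.
move=> Je; have := Jext_add ik _ Ja Je Pae; rewrite subnKC ?(ltnW ip) //.
by move=> /(_ (leq_trans (leq_subr _ _) pk))/(lt_of_chain_Jext p1 pk Iae); rewrite ltnn.
Qed.

Lemma UbarP x : Ubar x <->
  [\/ exists p c d, [/\ (1 <= p <= k)%N, I p c, I (k.+1 - p)%N d, x = c + d & P x],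
      I k x | x \in S].
Proof.
rewrite /underline_chain eqxx /Iext; split.
  case=> [[[p [q [pk qk pq [[c [d [Ic Id ->]]] Pcd]]]]|Ik]|xS];
    [constructor 1|constructor 2|constructor 3] => //.
  move: Ic Id; case: p pk pq => // p pk pq Ic; case: q qk pq => [|q] qk pq Id; first lia.
  by exists p.+1, c, d; split=> //; rewrite -pq addKn.
case=> [[p [c [d [/andP[p1 pk] Ic Id -> Pcd]]]]|Ik|xS];
  [left; left|by left; right|by right].
exists p, (k.+1 - p)%N; split; [done|lia|lia|split=> //; exists c, d].
by rewrite !ifN -?lt0n ?subn_gt0.
Qed.

Lemma chain_sum_Ubar p q c d : (1 <= p)%N -> (1 <= q)%N -> (p + q = k.+1)%N ->
  I p c -> I q d -> P (c + d) -> Ubar (c + d).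
Proof.
move=> p1 q1 pq Ic Id Pcd; apply/UbarP; constructor 1; exists p, c, d.
by rewrite -pq addKn; split=> //; lia.
Qed.

Lemma chain_Ubar x : I k x -> Ubar x.
Proof. by move=> Ik; apply/UbarP; constructor 2. Qed.

Lemma simple_Ubar x : x \in S -> Ubar x.
Proof. by move=> xS; apply/UbarP; constructor 3. Qed.

Lemma Ubar_pos x : Ubar x -> P x.
Proof.
case/UbarP=> [[p [c [d [_ _ _ _ //]]]]|Ik|xS]; last exact: simple_pos_root.
by apply: (chain_sub_pos _ Ik); rewrite k_gt0 leqnn.
Qed.

Lemma Jext_k_of_notin_Ubar x : P x -> ~ Ubar x -> J k x.
Proof.
by move=> Px nUx; apply/JextE; [rewrite k_gt0 leqnn|split=> // /chain_Ubar].
Qed.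

Lemma Ubar_sum_exchange a b p c d : P a -> P b -> (1 <= p <= k)%N ->
  I p c -> I (k.+1 - p)%N d -> a + b = c + d ->
  exists p q c' d',
    [/\ (1 <= p)%N, (1 <= q)%N, (p + q = k.+1)%N, I p c' & I q d'] /\
    a + b = c' + d' /\ pos_exchange Phi S a b c' d'.
Proof.
move=> Pa Pb pk Ic Id abcd.
have Pc : P c by apply: chain_sub_pos Ic.
have Pd : P d by apply: chain_sub_pos Id; lia.
have [p1 q1 pq] : [/\ 1 <= p, 1 <= k.+1 - p & p + (k.+1 - p) = k.+1]%N by split; lia.
case: (pos_root_sum_exchange RS SS Pa Pb Pc Pd abcd) => ex.
  by exists p, (k.+1 - p)%N, c, d.
by exists (k.+1 - p)%N, p, d, c; split; [split=> //; lia|rewrite abcd addrC].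
Qed.

(* e would lie in I_(p-i), so b = d + e would lie in I_(q+p-i), although
   q + p - i <= j. *)
Lemma Jext_pair_not_absorbed i j p q a b c d e : (i <= k)%N -> (j <= k)%N ->
  (k.+1 <= i + j)%N -> (1 <= p)%N -> (1 <= q)%N -> (p + q = k.+1)%N ->
  J i a -> J j b -> I p c -> I q d -> a + b = c + d -> P e -> c = a + e -> False.
Proof.
move=> ik jk ijk p1 q1 pq Ja Jb Ic Id abcd Pe cae.
have pk : (1 <= p <= k)%N by lia.
have Iae : I p (a + e) by rewrite -cae.
have [ip Ie] := chain_level_diff ik pk Ja Pe Iae.
have bde : b = d + e by apply: (addrI a); rewrite abcd cae addrAC addrA.
have Ib : I (q + (p - i)) b.
  by rewrite bde; apply: chain_add; rewrite -?bde //; [lia|lia|exact: Jext_pos Jb].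
by have := lt_of_chain_Jext _ jk Ib Jb; lia.
Qed.

Lemma Jext_pair_no_exchange i j p q a b c d : (i <= k)%N -> (j <= k)%N ->
  (k.+1 <= i + j)%N -> (1 <= p)%N -> (1 <= q)%N -> (p + q = k.+1)%N ->
  J i a -> J j b -> I p c -> I q d -> a + b = c + d -> ~ pos_exchange Phi S a b c d.
Proof.
move=> ik jk ijk p1 q1 pq Ja Jb Ic Id abcd.
case=> [[ac bd]|[e Pe dbe]|[e Pe cae]].
- have := lt_of_chain_Jext p1 ik Ic; rewrite -ac => /(_ Ja).
  by have := lt_of_chain_Jext q1 jk Id; rewrite -bd => /(_ Jb); lia.
- apply: (Jext_pair_not_absorbed jk ik _ q1 p1 _ Jb Ja Id Ic _ Pe dbe).
  + by rewrite addnC.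
  + by rewrite addnC.
  + by rewrite addrC abcd addrC.
- exact: (Jext_pair_not_absorbed ik jk ijk p1 q1 pq Ja Jb Ic Id abcd Pe cae).
Qed.

Lemma Jext_add_notin_Ubar i j a b : (i <= k)%N -> (j <= k)%N -> (k.+1 <= i + j)%N ->
  J i a -> J j b -> P (a + b) -> ~ Ubar (a + b).
Proof.
move=> ik jk ijk Ja Jb Pab; have [Pa Pb] := (Jext_pos Ja, Jext_pos Jb).
case/UbarP=> [[p' [c' [d' [pk Ic' Id' abcd' _]]]]|Ik|].
- have [p [q [c [d [[p1 q1 pq Ic Id] [abcd ex]]]]]] :=
    Ubar_sum_exchange Pa Pb pk Ic' Id' abcd'.
  exact: (Jext_pair_no_exchange ik jk ijk p1 q1 pq Ja Jb Ic Id abcd ex).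
- have ij0 : (0 < i + j)%N := leq_trans k_gt0 (ltnW ijk).
  by have := Jext_add ik jk Ja Jb Pab; rewrite (Jext_ge ij0 (ltnW ijk)) => -[].
- exact/negP/(pos_root_addr_notin_simple RS SS).
Qed.

Lemma pos_notin_Ubar_no_exchange p q a b c d : (1 <= p)%N -> (1 <= q)%N ->
  (p + q = k.+1)%N -> P a -> ~ Ubar a -> P b -> I p c -> I q d -> a + b = c + d ->
  ~ pos_exchange Phi S a b c d.
Proof.
move=> p1 q1 pq Pa nUa Pb Ic Id abcd.
have pk : (1 <= p <= k)%N by lia.
have qk : (1 <= q <= k)%N by lia.
case=> [[ac _]|[e Pe dbe]|[e Pe cae]].
- by apply/nUa/chain_Ubar; rewrite ac; apply: chain_mono Ic; lia.
- have Ibe : I q (b + e) by rewrite -dbe.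
  have [_] := chain_level_diff (leq0n k) qk (Pb : J 0 b) Pe Ibe.
  rewrite subn0 => Ie.
  have ace : a = c + e by apply: (addIr b); rewrite abcd dbe [b + e]addrC addrA.
  by apply: nUa; rewrite ace; apply: (chain_sum_Ubar p1 q1 pq Ic Ie); rewrite -ace.
- have Iae : I p (a + e) by rewrite -cae.
  have Jka := Jext_k_of_notin_Ubar Pa nUa.
  by have [kp _] := chain_level_diff (leqnn k) pk Jka Pe Iae; lia.
Qed.

Lemma pos_add_notin_Ubar a b : P a -> ~ Ubar a -> P b -> P (a + b) -> ~ Ubar (a + b).
Proof.
move=> Pa nUa Pb Pab.
case/UbarP=> [[p' [c' [d' [pk Ic' Id' abcd' _]]]]|Ik|].
- have [p [q [c [d [[p1 q1 pq Ic Id] [abcd ex]]]]]] :=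
    Ubar_sum_exchange Pa Pb pk Ic' Id' abcd'.
  exact: (pos_notin_Ubar_no_exchange p1 q1 pq Pa nUa Pb Ic Id abcd ex).
- have Jka := Jext_k_of_notin_Ubar Pa nUa.
  have := Jext_add (leqnn k) (leq0n k) Jka (Pb : J 0 b) Pab.
  by rewrite addn0 => /JextE[]; rewrite ?k_gt0 ?leqnn.
- exact/negP/(pos_root_addr_notin_simple RS SS).
Qed.

Lemma Ubar_subr_simple_exchange p q c d x s : (1 <= p)%N -> (1 <= q)%N ->
  (p + q = k.+1)%N -> I p c -> I q d -> s \in S -> P x -> x + s = c + d ->
  pos_exchange Phi S x s c d -> Ubar x.
Proof.
move=> p1 q1 pq Ic Id sS Px xscd.
have qk : (1 <= q <= k)%N by lia.
case=> [[xc _]|[e Pe dse]|[e Pe cxe]].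
- by apply: chain_Ubar; rewrite xc; apply: chain_mono Ic; lia.
- have Ise : I q (s + e) by rewrite -dse.
  have Js : J 0 s := simple_pos_root SS sS.
  have [_] := chain_level_diff (leq0n k) qk Js Pe Ise; rewrite subn0 => Ie.
  have xce : x = c + e by apply: (addIr s); rewrite xscd dse [s + e]addrC addrA.
  by rewrite xce; apply: (chain_sum_Ubar p1 q1 pq Ic Ie); rewrite -xce.
- have Pd : P d by apply: chain_sub_pos Id.
  have des : d + e = s by apply: (addrI x); rewrite xscd cxe addrAC addrA.
  by have := pos_root_addr_notin_simple RS SS Pd Pe; rewrite des sS.
Qed.

Lemma Ubar_subr_simple b s : Ubar b -> s \in S -> P (b - s) -> Ubar (b - s).
Proof.
move=> Ub sS Pbs; have Ps := simple_pos_root SS sS.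
case/UbarP: Ub => [[p' [c' [d' [pk Ic' Id' bcd' _]]]]|Ik|bS].
- have bscd' : b - s + s = c' + d' by rewrite subrK.
  have [p [q [c [d [[p1 q1 pq Ic Id] [bscd ex]]]]]] :=
    Ubar_sum_exchange Pbs Ps pk Ic' Id' bscd'.
  exact: (Ubar_subr_simple_exchange p1 q1 pq Ic Id sS Pbs bscd ex).
- have kk : (1 <= k <= k)%N by rewrite k_gt0 leqnn.
  apply/chain_Ubar/(chain_of_not_Jext kk Pbs) => Jbs.
  have Ibs : I k (b - s + s) by rewrite subrK.
  by have [] := chain_level_diff (leqnn k) kk Jbs Ps Ibs; rewrite ltnn.
- by have := pos_root_addr_notin_simple RS SS Pbs Ps; rewrite subrK bS.
Qed.

Local Notation Iu := (underline_chain P S k I).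
Local Notation Ju := (Jext P Iu k.+1).

Lemma underline_chain_lt m : m != k.+1 -> Iu m = I m.
Proof. by rewrite /underline_chain => /negbTE ->. Qed.

Lemma Jext_Iu_le m : (m <= k)%N -> Ju m = J m.
Proof.
move=> mk; have mk1 : m != k.+1 by rewrite neq_ltn ltnS mk.
by rewrite /Jext (minn_idPl mk) (minn_idPl (leqW mk)) underline_chain_lt.
Qed.

Lemma Jext_Iu_top m : (k.+1 <= m)%N -> Ju m = P `\` Ubar.
Proof. by move=> km; rewrite (Jext_ge (leq_trans (ltn0Sn k) km) km). Qed.

Lemma Jext_Iu_sub m : (m <= k.+1)%N -> Ju m `<=` J (minn m k).
Proof.
move=> mk x; have [mk'|km] := leqP m k; first by rewrite Jext_Iu_le.
rewrite Jext_Iu_top // => -[Px nUx].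
exact: Jext_k_of_notin_Ubar.
Qed.

Lemma underline_chain_ideal i : (1 <= i <= k.+1)%N -> is_ideal P S (Iu i).
Proof.
move=> /andP[i1 ik]; have [->|ne] := eqVneq i k.+1.
  split; first exact: Ubar_pos.
  exact: (down_closed_of_simple_descent RS SS Ubar_subr_simple).
rewrite underline_chain_lt //; case: GC => ideal _ _ _; apply: ideal; lia.
Qed.

Lemma underline_chain_mono i : (1 <= i < k.+1)%N -> Iu i `<=` Iu i.+1.
Proof.
move=> /andP[i1 ik]; have ik1 : i != k.+1 by rewrite neq_ltn ik.
rewrite (underline_chain_lt ik1).
have [-> x|ne] := eqVneq i k; first exact: chain_Ubar.
rewrite underline_chain_lt ?eqSS //; case: GC => _ mono _ _; apply: mono; lia.
Qed.

Lemma underline_chain_add i j : (i + j <= k.+1)%N ->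
  sumset (Iext Iu i) (Iext Iu j) `&` P `<=` Iext Iu (i + j).
Proof.
move=> ijk x [[a [b [Ia Ib ->]]] Pab].
case: i ijk Ia => [//|i] ijk Ia; case: j ijk Ib => [//|j] ijk Ib.
have [ik jk] : i.+1 != k.+1 /\ j.+1 != k.+1 by split; apply/eqP; lia.
rewrite /Iext /= (underline_chain_lt ik) in Ia.
rewrite /Iext /= (underline_chain_lt jk) in Ib.
rewrite /Iext addSn /=; have [ijk'|ijk'] := leqP (i.+1 + j.+1) k.
  have ijk1 : (i + j.+1).+1 != k.+1 by apply/eqP; lia.
  by rewrite (underline_chain_lt ijk1) -addSn; apply: chain_add.
have ijk1 : (i.+1 + j.+1 = k.+1)%N by lia.
by rewrite -addSn ijk1; apply: chain_sum_Ubar ijk1 Ia Ib Pab.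
Qed.

Lemma underline_chain_Jext_add i j : (i <= k.+1)%N -> (j <= k.+1)%N ->
  sumset (Ju i) (Ju j) `&` P `<=` Ju (i + j).
Proof.
move=> ik jk x [[a [b [Ja Jb ->]]] Pab].
have [ijk|ijk] := leqP (i + j) k.
  have [ik' jk'] : (i <= k)%N /\ (j <= k)%N by lia.
  rewrite (Jext_Iu_le ik') in Ja; rewrite (Jext_Iu_le jk') in Jb.
  by rewrite (Jext_Iu_le ijk); apply: Jext_add.
rewrite Jext_Iu_top //; split=> //.
have [i0|i_gt0] := posnP i.
  have jk1 : (k.+1 <= j)%N by lia.
  have [Pb nUb] : (P `\` Ubar) b by rewrite -(Jext_Iu_top jk1).
  rewrite addrC; apply: pos_add_notin_Ubar => //; first exact: Jext_pos Ja.
  by rewrite addrC.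
have [j0|j_gt0] := posnP j.
  have ik1 : (k.+1 <= i)%N by lia.
  have [Pa nUa] : (P `\` Ubar) a by rewrite -(Jext_Iu_top ik1).
  by apply: pos_add_notin_Ubar => //; exact: Jext_pos Jb.
apply: (@Jext_add_notin_Ubar (minn i k) (minn j k)); rewrite ?geq_minr //; first lia.
- exact: Jext_Iu_sub Ja.
- exact: Jext_Iu_sub Jb.
Qed.

Lemma underline_chain_geometric : is_geometric_chain P S k.+1 Iu.
Proof.
split; [exact: underline_chain_ideal|exact: underline_chain_mono|
  exact: underline_chain_add|exact: underline_chain_Jext_add].
Qed.

Lemma underline_chain_positive : is_positive_chain S k.+1 Iu.
Proof. by move=> x; exact: simple_Ubar. Qed.

End GeometricChain.

Lemma connected_continuous_gt (T : topologicalType) (R : realType) (A : set T)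
    (f : T -> R) (c : R) :
  connected A -> continuous f -> (forall x, A x -> f x != c) ->
  (exists2 x0, A x0 & c <= f x0) -> forall x, A x -> c < f x.
Proof.
move=> cA cf fc [x0 Ax0 fx0] x Ax; rewrite ltNge; apply/negP => fxc.
have /connected_intervalP fA :=
  connected_continuous_connected cA (continuous_subspaceT cf).
have [y Ay fyc] : (f @` A) c.
  by apply: (fA (f x) (f x0)); [exists x|exists x0|rewrite fxc].
by move: (fc y Ay); rewrite fyc eqxx.
Qed.

Section Regions.
Variables (R : realType) (n : nat).
Local Notation V := 'rV[R]_n.

Lemma convex_sub_connected_component (A C : set V) y :
  (forall u v t, C u -> C v -> 0 <= t <= 1 -> C (u + t *: (v - u))) ->
  C `<=` A -> C y -> C `<=` connected_component A y.
Proof.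
move=> convC CA Cy z Cz; pose g (t : R) := y + t *: (z - y).
have g_cont : continuous g.
  move=> t; apply: (@continuousD _ _ _ (fun=> y) (fun t : R => t *: (z - y))).
    exact: cst_continuous.
  apply: (@continuousZ _ _ _ (fun t : R => t) (fun=> z - y)) => //.
  exact: cst_continuous.
have sub_gC : g @` `[0, 1] `<=` C by move=> w [t t01 <-]; apply: convC.
apply: (connected_component_max _ (subset_trans sub_gC CA)).
- by exists 0; [rewrite /= in_itv /= lexx ler01|rewrite /g scale0r addr0].
- apply: connected_continuous_connected; first exact: segment_connected.
  exact: continuous_subspaceT.
- by exists 1; [rewrite /= in_itv /= lexx ler01|rewrite /g scale1r addrCA subrr addr0].
Qed.

End Regions.

Section ChainCell.
Variables (R : realType) (n : nat) (Phi S : seq 'rV[R]_n).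
Hypothesis RS : is_root_system Phi.
Hypothesis SS : is_simple_system Phi S.
Variables (k : nat) (I : nat -> set 'rV[R]_n).
Local Notation P := (pos_roots Phi S).

Definition chain_cell := [set x : 'rV[R]_n | (forall a, P a -> 0 < dotv x a) /\
  forall i a, (1 <= i <= k)%N -> P a ->
    (I i a -> dotv x a < i%:R) /\ (~ I i a -> i%:R < dotv x a)].

Lemma chain_cell_sub_catalan_compl : chain_cell `<=` catalan_compl Phi k.
Proof.
move=> x [x_pos x_side] a Ha r rk.
case: (pos_or_neg_root RS SS Ha) => [Pa|Pna].
  case: r rk => [|r] rk; first by rewrite gt_eqF // x_pos.
  have [lt_r gt_r] := x_side r.+1 a rk Pa.
  by case: (pselect (I r.+1 a)) => Ia; [rewrite lt_eqF ?lt_r|rewrite gt_eqF ?gt_r].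
have := x_pos _ Pna; rewrite dotvNr oppr_gt0 => xa_lt0.
by rewrite lt_eqF // (lt_le_trans xa_lt0).
Qed.

Lemma chain_cell_convex u v t : chain_cell u -> chain_cell v -> 0 <= t <= 1 ->
  chain_cell (u + t *: (v - u)).
Proof.
move=> [u_pos u_side] [v_pos v_side] t01.
have dotE a : dotv (u + t *: (v - u)) a = (1 - t) * dotv u a + t * dotv v a.
  by rewrite dotvDl dotvZl dotvBl; ring.
split=> [a Pa|i a ik Pa]; rewrite dotE; first by apply: convex_comb_gt; auto.
have [ul ug] := u_side i a ik Pa; have [vl vg] := v_side i a ik Pa.
by split=> Ia; [apply: convex_comb_lt|apply: convex_comb_gt]; auto.
Qed.

Lemma region_sub_chain_cell K Rg : (k <= K)%N -> is_region Phi K Rg ->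
  is_dominant P Rg -> (forall i, (1 <= i <= k)%N -> theta P Rg i = I i) ->
  Rg `<=` chain_cell.
Proof.
move=> kK [x1 [_ Rg_comp]] dom th x Rx.
split=> [a Pa|i a ik Pa]; first exact: dom.
split=> [Ia|nIa]; first by have [_ /(_ x Rx)] : theta P Rg i a by rewrite th.
(* <x, a> never crosses i on the connected region, and reaches i somewhere
   since a is not in theta_i *)
move: x Rx; rewrite Rg_comp; apply: connected_continuous_gt.
- exact: component_connected.
- exact: dotv_continuous.
- move=> y /connected_component_sub Cy; apply: Cy; first exact: pos_root_root Pa.
  by case/andP: ik => _ ik; apply: leq_trans ik kK.
rewrite -Rg_comp; apply: contrapT => none; apply: nIa; rewrite -th //; split=> // y Ry.
by rewrite ltNge; apply/negP => yi; apply: none; exists y.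
Qed.

End ChainCell.

Theorem lemma9 (R : realType) (n : nat) (Phi S : seq 'rV[R]_n) (k : nat)
    (I : nat -> set 'rV[R]_n) :
  is_root_system Phi -> irreducible_rs Phi -> is_simple_system Phi S ->
  (0 < k)%N ->
  is_geometric_chain (pos_roots Phi S) S k I ->
  let P := pos_roots Phi S in
  let Iu := underline_chain P S k I in
  [/\ is_geometric_chain P S k.+1 Iu,
      is_positive_chain S k.+1 Iu &
      forall Rb Rg : set 'rV[R]_n,
        is_region Phi k.+1 Rb -> is_dominant P Rb ->
        (forall i, (1 <= i <= k.+1)%N -> theta P Rb i = Iu i) ->
        is_region Phi k Rg -> is_dominant P Rg ->
        (forall i, (1 <= i <= k)%N -> theta P Rg i = I i) ->
        Rb `<=` Rg].
Proof.
move=> RS _ SS k_gt0 GC P Iu.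
split; [exact: underline_chain_geometric|exact: underline_chain_positive|].
move=> Rb Rg Rb_reg Rb_dom Rb_theta Rg_reg Rg_dom Rg_theta.
have Rb_theta_le i : (1 <= i <= k)%N -> theta P Rb i = I i.
  move=> /andP[i1 ik]; have ik1 : i != k.+1 by rewrite neq_ltn ltnS ik.
  by rewrite Rb_theta ?i1 ?(leqW ik) // /Iu underline_chain_lt.
have Rb_cell := region_sub_chain_cell (leqnSn k) Rb_reg Rb_dom Rb_theta_le.
have Rg_cell := region_sub_chain_cell (leqnn k) Rg_reg Rg_dom Rg_theta.
case: Rg_reg Rg_cell => y [y_compl ->] Rg_cell.
apply: subset_trans Rb_cell (convex_sub_connected_component _ _ _).
- exact: chain_cell_convex.
- exact: chain_cell_sub_catalan_compl.
- exact/Rg_cell/connected_component_refl.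
Qed.
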